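(* Let $\Omega\subseteq\mathbb R^N$ be an open set with bounded inner radius $R:=\sup_{x\in\Omega}\operatorname{dist}(x,\partial\Omega)<\infty$, let $\alpha,\beta\ge0$, $r_0>0$ and $\lambda>1$. There exist $c,C>0$ depending only on $N,R,\alpha,\beta,r_0,\lambda$ such that for every $u:\Omega\to\mathbb R$, $$c\|u\|^{(\beta)}_{\mathcal L^\alpha(\Omega)}\le\sup_{\substack{B_{\lambda r}(x)\subseteq\Omega\\ r\in(0,r_0)}}\Big(\ell^\beta(r)\|u\|_{L^\infty(B_r(x))}+\ell^{\alpha+\beta}(r)[u]_{\mathcal L^\alpha(B_r(x))}\Big)\le C\|u\|^{(\beta)}_{\mathcal L^\alpha(\Omega)},$$ meaning that either all three quantities are finite and the inequalities hold, or all three are infinite.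
   Context: $\ell(\rho):=|\ln(\min\{\rho,1/10\})|^{-1}$ for $\rho>0$, $\ell(0):=0$. For an open set $U$, $d(x):=\operatorname{dist}(x,\partial U)$, $d(x,y):=\min(d(x),d(y))$. For $\alpha,\beta\ge0$ and $u:U\to\mathbb R$: $[u]_{\mathcal L^\alpha(U)}:=\sup_{x\ne y\in U}\frac{|u(x)-u(y)|}{\ell^\alpha(|x-y|)}$, $[u]^{(\beta)}_{\mathcal L^\alpha(U)}:=\sup_{x\neq y\in U}\ell^{\alpha+\beta}(d(x,y))\frac{|u(x)-u(y)|}{\ell^\alpha(|x-y|)}$, $\|u\|^{(\beta)}_{\mathcal L^\alpha(U)}:=\sup_{x\in U}\ell^\beta(d(x))|u(x)|+[u]^{(\beta)}_{\mathcal L^\alpha(U)}$. *)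

From HB Require Import structures.
From mathcomp Require Import all_boot all_order all_algebra.
From mathcomp Require Import all_classical all_reals all_analysis.
Set Implicit Arguments. Unset Strict Implicit. Unset Printing Implicit Defensive.
Import Order.TTheory GRing.Theory Num.Theory.
Local Open Scope classical_set_scope.
Local Open Scope ring_scope.

Definition ell {R : realType} (rho : R) : R :=
  if 0 < rho then `|ln (Order.min rho (10%:R)^-1)|^-1 else 0.

Section Defs.
Variables (R : realType) (N : nat).
Local Notation pt := ('I_N -> R).

Definition edist (x y : pt) : R := Num.sqrt (\sum_(i < N) (x i - y i) ^+ 2).

Definition eball (x : pt) (r : R) : set pt := [set y | edist x y < r].

Definition eopen (U : set pt) : Prop :=
  forall x, U x -> exists2 e : R, 0 < e & eball x e `<=` U.

Definition eboundary (U : set pt) : set pt :=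
  [set y | forall e : R, 0 < e ->
     (exists z, eball y e z /\ U z) /\ (exists z, eball y e z /\ ~ U z)].

(* dist(x, boundary U) in the extended reals (+oo if the boundary is empty) *)
Definition edist_bd (U : set pt) (x : pt) : \bar R :=
  ereal_inf [set (edist x y)%:E | y in eboundary U].

Definition inner_radius (U : set pt) : \bar R :=
  ereal_sup [set edist_bd U x | x in U].

(* d(x) as a real number (finite whenever the inner radius is finite) *)
Definition dU (U : set pt) (x : pt) : R := fine (edist_bd U x).
Definition dU2 (U : set pt) (x y : pt) : R := Order.min (dU U x) (dU U y).

(* supremum of a set of nonnegative quantities (0 for the empty set) *)
Definition esup0 (S : set (\bar R)) : \bar R := ereal_sup ([set 0%E] `|` S).

Definition Lsemi (a : R) (U : set pt) (u : pt -> R) : \bar R :=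
  esup0 [set z | exists x y, [/\ U x, U y, x <> y &
          z = (`|u x - u y| / powR (ell (edist x y)) a)%:E]].

Definition Lsemiw (a b : R) (U : set pt) (u : pt -> R) : \bar R :=
  esup0 [set z | exists x y, [/\ U x, U y, x <> y &
          z = (powR (ell (dU2 U x y)) (a + b) * `|u x - u y|
                 / powR (ell (edist x y)) a)%:E]].

Definition Lnormw (a b : R) (U : set pt) (u : pt -> R) : \bar R :=
  (esup0 [set (powR (ell (dU U x)) b * `|u x|)%:E | x in U] + Lsemiw a b U u)%E.

(* sup norm of u on U (the L^infty norm, as a pointwise supremum) *)
Definition supnorm (U : set pt) (u : pt -> R) : \bar R :=
  esup0 [set (`|u x|)%:E | x in U].

Definition local_quantity (a b r0 lam : R) (Om : set pt) (u : pt -> R) : \bar R :=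
  esup0 [set z | exists x (r : R), [/\ 0 < r, r < r0, eball x (lam * r) `<=` Om &
          z = ((powR (ell r) b)%:E * supnorm (eball x r) u
               + (powR (ell r) (a + b))%:E * Lsemi a (eball x r) u)%E]].

End Defs.

(* Write K-comparable for "equal up to factors depending on N, R, alpha, beta, r0,
   lambda".  The only analytic input is that ell is slowly varying: if
   rho <= k sig with k >= 1 then ell(rho) <= (1 + ln k / ln 10) ell(sig)
   ([ell_dilate]).  Geometrically we need that d(y) >= rho - |x - y| whenever
   B_rho(x) lies in Omega, and that B_{d(x)}(x) lies in Omega (a segment from a
   point of Omega to a point outside crosses the boundary, [seg_boundary]).
   - Upper bound ([upper_bound]): if B_{lambda r}(x) lies in Omega then every y in
     B_r(x) has d(y) > (lambda - 1) r, so ell(r) is K-comparable to ell(d(y)) and to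
     ell(d(y,z)); each local term is then bounded by the weighted norm.
   - Lower bound ([lower_bound]): a point x with d(x) >= m is the centre of the
     admissible ball of radius theta m, theta = r0 / (2 lambda (R + r0)).  This
     bounds ell^beta(d(x)) |u(x)|; for a pair x, y with m = d(x,y) either
     |x - y| < theta m (both points lie in that ball) or ell(m) is K-comparable to
     ell(|x - y|) and |u(x) - u(y)| <= |u(x)| + |u(y)|. *)

From Pilot Require Import Defs.
From HB Require Import structures.
From mathcomp Require Import all_boot all_order all_algebra.
From mathcomp Require Import all_classical all_reals all_analysis.
From mathcomp Require Import ring lra.
Import Order.TTheory GRing.Theory Num.Theory.
Local Open Scope classical_set_scope.
Local Open Scope ring_scope.
Set Implicit Arguments. Unset Strict Implicit.

(* The Euclidean distance of [Defs], not the one of [mathcomp.analysis]. *)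
Local Notation edist := Pilot.Defs.edist.

Section Esup0.
Variable R : realType.
Implicit Types (S : set (\bar R)) (B z : \bar R).

Lemma esup0_ge0 S : (0 <= esup0 S)%E.
Proof. by apply: ereal_sup_ubound; left. Qed.

Lemma le_esup0 S z : S z -> (z <= esup0 S)%E.
Proof. by move=> Sz; apply: ereal_sup_ubound; right. Qed.

Lemma esup0_le S B : (0 <= B)%E -> (forall z, S z -> (z <= B)%E) -> (esup0 S <= B)%E.
Proof. by move=> B0 SB; apply: ge_ereal_sup => z [->|/SB]. Qed.

Lemma esup0_le_scaled (k : R) S B : 0 < k -> (0 <= B)%E ->
  (forall z, S z -> (k%:E * z <= B)%E) -> (k%:E * esup0 S <= B)%E.
Proof.
move=> k0 B0 SB; rewrite -lee_pdivlMl //; apply: esup0_le => [|z Sz].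
  by rewrite mule_ge0 // lee_fin invr_ge0 ltW.
by rewrite lee_pdivlMl // SB.
Qed.

End Esup0.

Section Ell.
Variable R : realType.
Implicit Types (rho sig k e : R).

Definition invell rho : R := - ln (Order.min rho 10%:R^-1).

Lemma ln10_gt0 : 0 < ln (10%:R : R).
Proof. by apply: ln_gt0; rewrite ltr1n. Qed.

Lemma min_tenth_gt0 rho : 0 < rho -> 0 < Order.min rho 10%:R^-1.
Proof. by move=> rho0; rewrite lt_min rho0 invr_gt0 ltr0n. Qed.

Lemma invell_ge rho : 0 < rho -> ln 10%:R <= invell rho.
Proof.
move=> rho0; rewrite /invell lerNr -lnV ?posrE ?ltr0n //.
by rewrite ler_ln ?posrE ?min_tenth_gt0 ?invr_gt0 ?ltr0n // ge_min lexx orbT.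
Qed.

Lemma invell_gt0 rho : 0 < rho -> 0 < invell rho.
Proof. by move=> rho0; apply: lt_le_trans (invell_ge rho0); apply: ln10_gt0. Qed.

Lemma ellE rho : 0 < rho -> ell rho = (invell rho)^-1.
Proof.
move=> rho0; rewrite /ell rho0 -normrN -/(invell rho).
by rewrite ger0_norm // ltW // invell_gt0.
Qed.

Lemma ell_gt0 rho : 0 < rho -> 0 < ell rho.
Proof. by move=> rho0; rewrite ellE // invr_gt0 invell_gt0. Qed.

Lemma ell_ge0 rho : 0 <= ell rho.
Proof. by rewrite /ell; case: ifP => // _; rewrite invr_ge0. Qed.

Lemma invell_dilate k rho sig : 1 <= k -> 0 < rho -> 0 < sig -> rho <= k * sig ->
  invell sig <= invell rho + ln k.
Proof.
move=> k1 rho0 sig0 rks; have k0 : 0 < k by apply: lt_le_trans k1.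
have mrho0 := min_tenth_gt0 rho0; have msig0 := min_tenth_gt0 sig0.
have shrink : Order.min rho 10%:R^-1 / k <= Order.min sig 10%:R^-1.
  rewrite le_min !ler_pdivrMr //; apply/andP; split.
    by rewrite mulrC; apply: le_trans rks; rewrite ge_min lexx.
  by rewrite ge_min ler_peMr ?invr_ge0 ?ler0n ?orbT.
have -> : invell rho + ln k = - ln (Order.min rho 10%:R^-1 / k).
  by rewrite lnM ?posrE ?invr_gt0 // lnV ?posrE // opprD opprK.
by rewrite /invell lerN2 ler_ln ?posrE ?divr_gt0.
Qed.

Definition ell_const k : R := 1 + ln k / ln 10%:R.

Lemma ell_const_ge1 k : 1 <= k -> 1 <= ell_const k.
Proof. by move=> k1; rewrite /ell_const lerDl divr_ge0 ?ln_ge0 // ler1n. Qed.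

Lemma ell_dilate k rho sig : 1 <= k -> 0 < rho -> 0 < sig -> rho <= k * sig ->
  ell rho <= ell_const k * ell sig.
Proof.
move=> k1 rho0 sig0 rks; rewrite !ellE // ler_pdivlMr ?invell_gt0 //.
rewrite mulrC ler_pdivrMr ?invell_gt0 //.
apply: (le_trans (invell_dilate k1 rho0 sig0 rks)).
rewrite /ell_const mulrDl mul1r lerD2l mulrAC ler_pdivlMr ?ln10_gt0 //.
by rewrite ler_wpM2l ?ln_ge0 ?invell_ge.
Qed.

Lemma powR_ell_dilate k rho sig e : 0 <= e -> 1 <= k -> 0 < rho -> 0 < sig ->
  rho <= k * sig -> powR (ell rho) e <= powR (ell_const k) e * powR (ell sig) e.
Proof.
move=> e0 k1 rho0 sig0 rks; have K0 := le_trans ler01 (ell_const_ge1 k1).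
rewrite -powRM ?ell_ge0 //; apply: ge0_ler_powR; rewrite ?nnegrE ?mulr_ge0 ?ell_ge0 //.
exact: ell_dilate.
Qed.

End Ell.

Section Euclid.
Variables (R : realType) (N : nat).
Local Notation pt := ('I_N -> R).
Implicit Types (x y z : pt) (p q : 'I_N -> R).

Lemma sumsq_ge0 p : 0 <= \sum_(i < N) p i ^+ 2.
Proof. by apply: sumr_ge0 => i _; rewrite sqr_ge0. Qed.

Lemma sqrt_sumsq_eq0 p : Num.sqrt (\sum_(i < N) p i ^+ 2) = 0 -> forall i, p i = 0.
Proof.
move/eqP; rewrite sqrtr_eq0 => sum_le0 i; apply/eqP; rewrite -sqrf_eq0.
have sum0 : \sum_(i < N) p i ^+ 2 = 0 by apply/eqP; rewrite eq_le sum_le0 sumsq_ge0.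
by rewrite (psumr_eq0P _ sum0) // => j _; rewrite sqr_ge0.
Qed.

(* Cauchy-Schwarz inequality in R^N, via 2 p_i q_i A B <= p_i^2 B^2 + q_i^2 A^2. *)
Lemma cauchy_schwarz p q :
  \sum_(i < N) p i * q i <=
  Num.sqrt (\sum_(i < N) p i ^+ 2) * Num.sqrt (\sum_(i < N) q i ^+ 2).
Proof.
set A := Num.sqrt _; set B := Num.sqrt _.
have [A0|Apos] := eqVneq A 0.
  by rewrite A0 mul0r big1 // => i _; rewrite (sqrt_sumsq_eq0 A0) mul0r.
have [B0|Bpos] := eqVneq B 0.
  by rewrite B0 mulr0 big1 // => i _; rewrite (sqrt_sumsq_eq0 B0) mulr0.
have AB0 : 0 < 2 * A * B by rewrite !mulr_gt0 // lt_def ?Apos ?Bpos sqrtr_ge0.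
have termwise : \sum_(i < N) (p i * q i) * (2 * A * B) <=
                \sum_(i < N) (p i ^+ 2 * B ^+ 2 + q i ^+ 2 * A ^+ 2).
  apply: ler_sum => i _; rewrite -subr_ge0.
  have -> : p i ^+ 2 * B ^+ 2 + q i ^+ 2 * A ^+ 2 - p i * q i * (2 * A * B) =
            (p i * B - q i * A) ^+ 2 by ring.
  exact: sqr_ge0.
rewrite -mulr_suml big_split /= -!mulr_suml !sqr_sqrtr ?sumsq_ge0 // in termwise.
rewrite -(ler_pM2r AB0); apply: (le_trans termwise).
have -> : A * B * (2 * A * B) = A ^+ 2 * B ^+ 2 + B ^+ 2 * A ^+ 2 by ring.
by rewrite /A /B !sqr_sqrtr ?sumsq_ge0.
Qed.

Lemma edist_ge0 x y : 0 <= edist x y.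
Proof. exact: sqrtr_ge0. Qed.

Lemma edistxx x : edist x x = 0.
Proof. by rewrite /edist big1 ?sqrtr0 // => i _; rewrite subrr expr0n. Qed.

Lemma eball_center x (r : R) : 0 < r -> eball x r x.
Proof. by rewrite /eball /= edistxx. Qed.

Lemma edist_gt0 x y : x <> y -> 0 < edist x y.
Proof.
move=> xy; rewrite lt_def edist_ge0 andbT; apply/eqP => /sqrt_sumsq_eq0 dxy.
by apply: xy; apply: funext => i; apply/eqP; rewrite -subr_eq0 dxy.
Qed.

Lemma edist_triangle x y z : edist x z <= edist x y + edist y z.
Proof.
rewrite /edist; set A := Num.sqrt (\sum_(i < N) (x i - y i) ^+ 2).
set B := Num.sqrt (\sum_(i < N) (y i - z i) ^+ 2).
rewrite -[A + B]ger0_norm ?addr_ge0 ?sqrtr_ge0 // -sqrtr_sqr ler_sqrt ?sqr_ge0 //.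
have -> : \sum_(i < N) (x i - z i) ^+ 2 =
   \sum_(i < N) (x i - y i) ^+ 2 + \sum_(i < N) (y i - z i) ^+ 2 +
   2 * \sum_(i < N) (x i - y i) * (y i - z i).
  by rewrite mulr_sumr -!big_split /=; apply: eq_bigr => i _; ring.
have -> : (A + B) ^+ 2 = A ^+ 2 + B ^+ 2 + 2 * (A * B) by ring.
rewrite /A /B !sqr_sqrtr ?sumsq_ge0 // lerD2l ler_pM2l //.
exact: (cauchy_schwarz (fun i => x i - y i) (fun i => y i - z i)).
Qed.

Definition seg x y (t : R) : pt := fun i => x i + t * (y i - x i).

Lemma seg0 x y : seg x y 0 = x.
Proof. by apply: funext => i; rewrite /seg mul0r addr0. Qed.

Lemma seg1 x y : seg x y 1 = y.
Proof. by apply: funext => i; rewrite /seg mul1r addrC subrK. Qed.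

Lemma edist_seg x y t s : edist (seg x y t) (seg x y s) = `|t - s| * edist x y.
Proof.
rewrite /edist /seg.
have -> : \sum_(i < N) (x i + t * (y i - x i) - (x i + s * (y i - x i))) ^+ 2 =
          (t - s) ^+ 2 * \sum_(i < N) (x i - y i) ^+ 2.
  by rewrite mulr_sumr; apply: eq_bigr => i _; ring.
by rewrite sqrtrM ?sqr_ge0 // sqrtr_sqr.
Qed.

End Euclid.

Section Domain.
Variables (R : realType) (N : nat).
Local Notation pt := ('I_N -> R).
Implicit Types (x y z : pt) (Om : set pt).

Lemma seg_close x y (e t s : R) : 0 < e ->
  `|t - s| <= e / (edist x y + 1) -> edist (seg x y t) (seg x y s) < e.
Proof.
move=> e0 ts; have d1 : 0 < edist x y + 1 by rewrite ltr_pwDr ?edist_ge0.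
rewrite edist_seg; apply: le_lt_trans (_ : e / (edist x y + 1) * edist x y < e).
  by rewrite ler_wpM2r ?edist_ge0.
by rewrite mulrAC ltr_pdivrMr // ltr_pM2l // ltrDl.
Qed.

Lemma seg_boundary Om x y : Om x -> ~ Om y ->
  exists z, eboundary Om z /\ edist x z <= edist x y.
Proof.
move=> Ox Ny; pose T := [set t : R | 0 <= t <= 1 /\ ~ Om (seg x y t)].
have T1 : T 1 by split; [rewrite ler01 lexx | rewrite seg1].
have infT : has_inf T by split; [exists 1 | exists 0 => t [/andP[]]].
set ts := inf T.
have ts0 : 0 <= ts by apply: lb_le_inf => //; [exists 1 | move=> t [/andP[]]].
have ts1 : ts <= 1 := ge_inf infT.2 T1.
have below s : 0 <= s < ts -> Om (seg x y s).
  move=> /andP[s0 sts]; apply: contrapT => Ns; suff : ts <= s by rewrite leNgt sts.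
  by apply: (ge_inf infT.2); rewrite /T /= s0 (ltW (lt_le_trans sts ts1)).
exists (seg x y ts); split; last first.
  rewrite -[X in edist X _](seg0 x y) edist_seg sub0r normrN ger0_norm //.
  by rewrite -[X in _ <= X]mul1r ler_wpM2r ?edist_ge0.
move=> e e0; have eta0 : 0 < e / (edist x y + 1) by rewrite divr_gt0 ?ltr_pwDr ?edist_ge0.
split.
  have [Oz|Nz] := pselect (Om (seg x y ts)).
    by exists (seg x y ts); rewrite /eball /= edistxx.
  have tsp : 0 < ts by rewrite lt_def ts0 andbT; apply: contraPneq Nz => ->; rewrite seg0.
  set s := Order.max 0 (ts - e / (edist x y + 1)).
  have s0 : 0 <= s by rewrite le_max lexx.
  have s_ts : s < ts by rewrite gt_max tsp ltrBlDr ltrDl eta0.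
  exists (seg x y s); split; last by apply: below; rewrite s0 s_ts.
  apply: seg_close => //; rewrite ger0_norm; last by rewrite subr_ge0 ltW.
  have : ts - e / (edist x y + 1) <= s by rewrite le_max lexx orbT.
  lra.
have [t Tt tlt] := inf_adherent eta0 infT.
exists (seg x y t); split; last by case: Tt.
apply: seg_close => //; rewrite distrC ger0_norm; last by rewrite subr_ge0 (ge_inf infT.2 Tt).
by move: tlt; lra.
Qed.

Lemma boundary_notin Om z : eopen Om -> eboundary Om z -> ~ Om z.
Proof.
move=> oOm bz Oz; have [e e0 sub] := oOm z Oz.
have [_ [w [bw nw]]] := bz e e0; exact: nw (sub _ bw).
Qed.

Lemma edist_bd_ge Om x y (rho : R) : eopen Om -> eball x rho `<=` Om ->
  ((rho - edist x y)%:E <= edist_bd Om y)%E.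
Proof.
move=> oOm sub; apply: le_ereal_inf_tmp => w [z bz <-]; rewrite lee_fin.
have : ~ edist x z < rho by move=> xz; apply: boundary_notin oOm bz (sub _ xz).
move/negP; rewrite -leNgt lerBlDl => rz; exact: le_trans rz (edist_triangle x y z).
Qed.

Lemma edist_bd_le Om x (Rad : R) : inner_radius Om = Rad%:E -> Om x ->
  (edist_bd Om x <= Rad%:E)%E.
Proof. by move=> <- Ox; apply: ereal_sup_ubound; exists x. Qed.

Lemma dU_bounds Om x y (rho Rad : R) : eopen Om -> inner_radius Om = Rad%:E ->
  eball x rho `<=` Om -> Om y -> rho - edist x y <= dU Om y <= Rad.
Proof.
move=> oOm hR sub Oy.
move: (edist_bd_ge y oOm sub) (edist_bd_le hR Oy); rewrite /dU.
by case: (edist_bd Om y) => [e| |] //=; rewrite !lee_fin => -> ->.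
Qed.

Lemma dU_pos Om x (Rad : R) : eopen Om -> inner_radius Om = Rad%:E -> Om x ->
  0 < dU Om x <= `|Rad|.
Proof.
move=> oOm hR Ox; have [e e0 sub] := oOm x Ox.
have /andP[ed dR] := dU_bounds oOm hR sub Ox; rewrite edistxx subr0 in ed.
by rewrite (lt_le_trans e0 ed) (le_trans dR (ler_norm _)).
Qed.

Lemma ball_dU_sub Om x (Rad : R) : inner_radius Om = Rad%:E -> Om x ->
  eball x (dU Om x) `<=` Om.
Proof.
move=> hR Ox y xy; apply: contrapT => Ny.
have [z [bz xz]] := seg_boundary Ox Ny.
have : (edist_bd Om x <= (edist x z)%:E)%E by apply: ereal_inf_lbound; exists z.
move: xy; rewrite /eball /= /dU; case: (edist_bd Om x) => [e| |] //=.
- by rewrite lee_fin => xy ez; have := lt_le_trans xy (le_trans ez xz); rewrite ltxx.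
- by rewrite ltNge edist_ge0.
Qed.

End Domain.

Section Main.
Variables (R : realType) (N : nat) (a b r0 lam : R).
Hypotheses (a0 : 0 <= a) (b0 : 0 <= b) (r0_gt0 : 0 < r0) (lam_gt1 : 1 < lam).
Local Notation pt := ('I_N -> R).

Let lam_gt0 : 0 < lam. Proof. exact: lt_trans lam_gt1. Qed.
Let ab0 : 0 <= a + b. Proof. exact: addr_ge0. Qed.

Lemma powR_b_le_ab (K : R) : 1 <= K -> powR K b <= powR K (a + b).
Proof. by move=> K1; apply: ler_powR; rewrite // lerDr. Qed.

Lemma local_quantity_ball (Om : set pt) (u : pt -> R) x r (q : R) :
  0 < r -> r < r0 -> eball x (lam * r) `<=` Om ->
  (local_quantity a b r0 lam Om u <= q%:E)%E ->
  (forall y, eball x r y -> powR (ell r) b * `|u y| <= q) /\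
  (forall y z, eball x r y -> eball x r z -> y <> z ->
     powR (ell r) (a + b) * `|u y - u z| / powR (ell (edist y z)) a <= q).
Proof.
move=> r_gt0 r_r0 sub Qq.
set X := ((powR (ell r) b)%:E * supnorm (eball x r) u)%E.
set Y := ((powR (ell r) (a + b))%:E * Lsemi a (eball x r) u)%E.
have XYq : (X + Y <= q%:E)%E by apply: le_trans Qq; apply: le_esup0; exists x, r.
have X0 : (0 <= X)%E by rewrite mule_ge0 ?lee_fin ?powR_ge0 ?esup0_ge0.
have Y0 : (0 <= Y)%E by rewrite mule_ge0 ?lee_fin ?powR_ge0 ?esup0_ge0.
split=> [y xy | y z xy xz yz]; rewrite -lee_fin.
  apply: le_trans (le_trans (leeDl _ Y0) XYq); rewrite EFinM.
  by apply: lee_wpmul2l; rewrite ?lee_fin ?powR_ge0 //; apply: le_esup0; exists y.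
apply: le_trans (le_trans (leeDr _ X0) XYq); rewrite -mulrA EFinM.
by apply: lee_wpmul2l; rewrite ?lee_fin ?powR_ge0 //; apply: le_esup0; exists y, z.
Qed.

(* Lower bound: a point x at distance >= m from the boundary is the centre of the
   admissible ball of radius theta * m, whose logarithmic size is comparable to m. *)
Definition theta (Rad : R) : R := r0 / (2 * lam * (`|Rad| + r0)).

Lemma theta_gt0 Rad : 0 < theta Rad.
Proof. by rewrite divr_gt0 // !mulr_gt0 // ltr_wpDl. Qed.

(* theta is small enough that B_{lambda theta m}(x) lies well inside B_m(x). *)
Lemma lam_theta Rad : lam * theta Rad <= 2^-1.
Proof.
have D0 : 0 < `|Rad| + r0 by rewrite ltr_wpDl.
have -> : lam * theta Rad = 2^-1 * (r0 / (`|Rad| + r0)).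
  by rewrite /theta; field; rewrite ?gt_eqF.
by rewrite -[X in _ <= X]mulr1 ler_wpM2l ?invr_ge0 // ler_pdivrMr // mul1r lerDr.
Qed.

Lemma theta_inv_ge1 Rad : 1 <= (theta Rad)^-1.
Proof.
rewrite invf_ge1 ?theta_gt0 //; apply: le_trans (_ : lam * theta Rad <= _).
  by rewrite ler_peMl ?ltW ?theta_gt0.
rewrite (le_trans (lam_theta Rad)) //.
by rewrite invf_le1 ?ler1n.
Qed.

Lemma admissible_ball (Om : set pt) x (m Rad : R) : eopen Om -> inner_radius Om = Rad%:E ->
  Om x -> 0 < m <= dU Om x ->
  [/\ 0 < theta Rad * m, theta Rad * m < r0 & eball x (lam * (theta Rad * m)) `<=` Om].
Proof.
move=> oOm hR Ox /andP[m0 md]; have /andP[_ dR] := dU_pos oOm hR Ox.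
have th0 := theta_gt0 Rad; have D0 : 0 < `|Rad| + r0 by rewrite ltr_wpDl.
have thD : theta Rad * (`|Rad| + r0) = r0 / (2 * lam).
  by rewrite /theta; field; rewrite ?gt_eqF.
split; first by rewrite mulr_gt0.
  apply: le_lt_trans (_ : theta Rad * (`|Rad| + r0) < r0).
    by rewrite ler_pM2l // (le_trans md) // (le_trans dR) // lerDl ltW.
  rewrite thD ltr_pdivrMr ?mulr_gt0 // ltr_pMr // (lt_le_trans lam_gt1) //.
  by rewrite ler_peMl ?ltW // ltr1n.
apply: subset_trans (ball_dU_sub hR Ox) => y; rewrite /eball /= => xy.
apply: lt_le_trans xy _; apply: le_trans md; rewrite mulrA ler_piMl ?(ltW m0) //.
by rewrite (le_trans (lam_theta Rad)) // invf_le1 ?ler1n.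
Qed.

Definition lower_const (Rad : R) : R := ell_const (theta Rad)^-1.

Lemma lower_const_ge1 Rad : 1 <= lower_const Rad.
Proof. exact/ell_const_ge1/theta_inv_ge1. Qed.

Section LowerPointwise.
Variables (Om : set pt) (u : pt -> R) (Rad q : R).
Hypotheses (oOm : eopen Om) (hR : inner_radius Om = Rad%:E)
  (hQ : (local_quantity a b r0 lam Om u <= q%:E)%E).
Let K := lower_const Rad.
Let K1 : 1 <= K. Proof. exact: lower_const_ge1. Qed.
Let K0 : 0 <= K. Proof. exact: le_trans ler01 K1. Qed.

Lemma weight_bound x (m : R) : Om x -> 0 < m <= dU Om x ->
  powR (ell m) b * `|u x| <= powR K b * q.
Proof.
move=> Ox mx; have [r_gt0 r_r0 sub] := admissible_ball oOm hR Ox mx.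
have [ball_bd _] := local_quantity_ball r_gt0 r_r0 sub hQ.
have m0 : 0 < m by case/andP: mx.
apply: le_trans (_ : powR K b * (powR (ell (theta Rad * m)) b * `|u x|) <= _).
  rewrite mulrA ler_wpM2r // powR_ell_dilate ?theta_inv_ge1 //.
  by rewrite mulrA mulVf ?mul1r ?gt_eqF ?theta_gt0.
by apply: ler_wpM2l; [exact: powR_ge0 | apply/ball_bd/eball_center].
Qed.

(* Difference quotients: close pairs lie in one admissible ball; for far pairs
   ell(d(x,y)) is comparable to ell(|x - y|) and the two values of u are
   bounded separately. *)
Lemma holder_bound x y : Om x -> Om y -> x <> y ->
  powR (ell (dU2 Om x y)) (a + b) * `|u x - u y| / powR (ell (edist x y)) a
    <= 2 * powR K (a + b) * q.
Proof.
move=> Ox Oy xy; set m := dU2 Om x y.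
have /andP[dx0 _] := dU_pos oOm hR Ox; have /andP[dy0 _] := dU_pos oOm hR Oy.
have m0 : 0 < m by rewrite lt_min dx0 dy0.
have mx : 0 < m <= dU Om x by rewrite m0 ge_min lexx.
have my : 0 < m <= dU Om y by rewrite m0 ge_min lexx orbT.
have Kp : 0 < K by apply: lt_le_trans K1.
have q0 : 0 <= q by rewrite -lee_fin (le_trans (esup0_ge0 _) hQ).
have del0 : 0 < edist x y by apply: edist_gt0.
have P0 : 0 < powR (ell (edist x y)) a by apply/powR_gt0/ell_gt0.
have [r_gt0 r_r0 sub] := admissible_ball oOm hR Ox mx.
have [_ ball_quot] := local_quantity_ball r_gt0 r_r0 sub hQ.
case: (ltP (edist x y) (theta Rad * m)) => [near | far].
  apply: le_trans (_ : powR K (a + b) * q <= _); last first.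
    by rewrite -mulrA ler_peMl ?mulr_ge0 ?powR_ge0 // ler1n.
  apply: le_trans (_ : powR K (a + b) * (powR (ell (theta Rad * m)) (a + b) *
      `|u x - u y| / powR (ell (edist x y)) a) <= _); last first.
    by apply: ler_wpM2l; [exact: powR_ge0 | exact: ball_quot (eball_center _ r_gt0) near xy].
  rewrite !mulrA ler_wpM2r ?invr_ge0 ?powR_ge0 // ler_wpM2r //.
  rewrite powR_ell_dilate ?theta_inv_ge1 //.
  by rewrite mulrA mulVf ?mul1r ?gt_eqF ?theta_gt0.
have ratio : powR (ell m) a / powR (ell (edist x y)) a <= powR K a.
  rewrite ler_pdivrMr // powR_ell_dilate ?theta_inv_ge1 //.
  by rewrite -(ler_pM2l (theta_gt0 Rad)) mulrA mulfV ?mul1r ?gt_eqF ?theta_gt0.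
have values : powR (ell m) b * `|u x - u y| <= 2 * (powR K b * q).
  apply: le_trans (_ : powR (ell m) b * (`|u x| + `|u y|) <= _).
    by rewrite ler_wpM2l ?powR_ge0 ?ler_normB.
  by rewrite mulrDr mulr2n mulrDl mul1r lerD ?weight_bound.
rewrite powRD ?(gt_eqF (ell_gt0 m0)) ?implybT //.
rewrite powRD ?(gt_eqF Kp) ?implybT //.
have -> : powR (ell m) a * powR (ell m) b * `|u x - u y| / powR (ell (edist x y)) a =
  powR (ell m) a / powR (ell (edist x y)) a * (powR (ell m) b * `|u x - u y|) :> R.
  by ring.
apply: le_trans (_ : powR K a * (2 * (powR K b * q)) <= _).
  by rewrite ler_pM ?divr_ge0 ?mulr_ge0 ?powR_ge0.
by rewrite mulrCA !mulrA.
Qed.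

(* Hence the weighted norm is at most 3 K^(a+b) times any bound q of the local
   quantity (using K^b <= K^(a+b)). *)
Lemma lnormw_le_local : (Lnormw a b Om u <= (3 * powR K (a + b) * q)%:E)%E.
Proof.
have q0 : 0 <= q by rewrite -lee_fin (le_trans (esup0_ge0 _) hQ).
have M0 : 0 <= powR K (a + b) * q by rewrite mulr_ge0 ?powR_ge0.
have -> : 3 * powR K (a + b) * q = powR K (a + b) * q + 2 * powR K (a + b) * q :> R.
  by ring.
rewrite /Lnormw EFinD; apply: leeD; apply: esup0_le.
- by rewrite lee_fin.
- move=> _ [x Ox <-]; rewrite lee_fin.
  have /andP[dx0 _] := dU_pos oOm hR Ox.
  apply: le_trans (weight_bound Ox _) _; first by rewrite dx0 lexx.
  by rewrite ler_wpM2r ?powR_b_le_ab.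
- by rewrite lee_fin -mulrA mulr_ge0.
- by move=> _ [x [y [Ox Oy xy ->]]]; rewrite lee_fin holder_bound.
Qed.

End LowerPointwise.

Lemma lower_bound (Om : set pt) (u : pt -> R) Rad :
  eopen Om -> inner_radius Om = Rad%:E ->
  (((3 * powR (lower_const Rad) (a + b))^-1)%:E * Lnormw a b Om u
     <= local_quantity a b r0 lam Om u)%E.
Proof.
move=> oOm hR; have M0 : 0 < 3 * powR (lower_const Rad) (a + b).
  by rewrite mulr_gt0 // powR_gt0 // (lt_le_trans ltr01 (lower_const_ge1 _)).
have Q0 : (0 <= local_quantity a b r0 lam Om u)%E by exact: esup0_ge0.
case hQ : (local_quantity a b r0 lam Om u) Q0 => [q| |] // _; last by rewrite leey.
have hq : (local_quantity a b r0 lam Om u <= q%:E)%E by rewrite hQ.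
apply: le_trans (lee_wpmul2l _ (lnormw_le_local oOm hR hq)) _.
  by rewrite lee_fin invr_ge0 ltW.
by rewrite -EFinM mulrA mulVf ?gt_eqF // mul1r.
Qed.

(* Upper bound: every point y of an admissible ball B_r(x) has distance more than
   (lam - 1) r from the boundary, so r <= k d(y) with k = max(1, 1/(lam - 1)). *)
Definition upper_ratio : R := Order.max 1 (lam - 1)^-1.
Definition upper_const : R := ell_const upper_ratio.

Lemma upper_ratio_ge1 : 1 <= upper_ratio.
Proof. by rewrite le_max lexx. Qed.

Lemma upper_const_ge1 : 1 <= upper_const.
Proof. exact/ell_const_ge1/upper_ratio_ge1. Qed.

Lemma admissible_ball_dU (Om : set pt) x y (r Rad : R) : eopen Om ->
  inner_radius Om = Rad%:E -> 0 < r -> eball x (lam * r) `<=` Om -> eball x r y ->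
  [/\ Om y, 0 < dU Om y & r <= upper_ratio * dU Om y].
Proof.
move=> oOm hR r_gt0 sub xy; have l1 : 0 < lam - 1 by rewrite subr_gt0.
have Oy : Om y by apply: sub; apply: lt_trans xy _; rewrite ltr_pMl.
have /andP[dy _] := dU_bounds oOm hR sub Oy.
have far : (lam - 1) * r < dU Om y by apply: lt_le_trans dy; move: xy; rewrite /eball /=; lra.
have dy0 : 0 < dU Om y by apply: le_lt_trans far; rewrite mulr_ge0 ?ltW.
split=> //; apply: le_trans (_ : (lam - 1)^-1 * dU Om y <= _).
  by rewrite -(ler_pM2l l1) mulrA mulfV ?gt_eqF // mul1r ltW.
by rewrite ler_wpM2r ?(ltW dy0) // /upper_ratio le_max lexx orbT.
Qed.

(* Upper bound, with C = upper_const^(a+b): both parts of every local term are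
   dominated by the corresponding parts of the weighted norm. *)
Lemma upper_bound (Om : set pt) (u : pt -> R) Rad : eopen Om -> inner_radius Om = Rad%:E ->
  (local_quantity a b r0 lam Om u <=
    (powR upper_const (a + b))%:E * Lnormw a b Om u)%E.
Proof.
move=> oOm hR; set K := upper_const; have K1 := upper_const_ge1.
have M0 : (0 <= (powR K (a + b))%:E)%E by rewrite lee_fin powR_ge0.
rewrite /Lnormw; set A := esup0 _; set S := Lsemiw a b Om u.
have A0 : (0 <= A)%E := esup0_ge0 _; have S0 : (0 <= S)%E := esup0_ge0 _.
apply: esup0_le; first by rewrite mule_ge0 ?adde_ge0.
move=> _ [x [r [r_gt0 _ sub ->]]]; have er := ell_gt0 r_gt0.
have inner := admissible_ball_dU oOm hR r_gt0 sub.
rewrite ge0_muleDr //; apply: leeD.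
  apply: le_trans (_ : (powR K b)%:E * A <= _)%E; last first.
    by rewrite lee_wpmul2r // lee_fin powR_b_le_ab.
  apply: esup0_le_scaled; rewrite ?powR_gt0 ?mule_ge0 ?lee_fin ?powR_ge0 //.
  move=> _ [y xy <-]; have [Oy dy0 rdy] := inner y xy.
  apply: le_trans (_ : (powR K b)%:E * (powR (ell (dU Om y)) b * `|u y|)%:E <= _)%E.
    by rewrite -EFinM lee_fin mulrA ler_wpM2r // powR_ell_dilate ?upper_ratio_ge1.
  by rewrite lee_wpmul2l ?lee_fin ?powR_ge0 // le_esup0 //; exists y.
apply: esup0_le_scaled; rewrite ?powR_gt0 ?mule_ge0 ?lee_fin ?powR_ge0 //.
move=> _ [y [z [xy xz yz ->]]].
have [Oy dy0 rdy] := inner y xy; have [Oz dz0 rdz] := inner z xz.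
have rm : r <= upper_ratio * dU2 Om y z.
  by rewrite /dU2 -ler_pdivrMl ?(lt_le_trans ltr01 upper_ratio_ge1) // le_min
    !ler_pdivrMl ?(lt_le_trans ltr01 upper_ratio_ge1) ?rdy ?rdz.
apply: le_trans (_ : (powR K (a + b))%:E * (powR (ell (dU2 Om y z)) (a + b) *
    `|u y - u z| / powR (ell (edist y z)) a)%:E <= _)%E.
  rewrite -EFinM lee_fin !mulrA ler_wpM2r ?invr_ge0 ?powR_ge0 // ler_wpM2r //.
  by rewrite powR_ell_dilate ?upper_ratio_ge1 // lt_min dy0 dz0.
by rewrite lee_wpmul2l // le_esup0 //; exists y, z.
Qed.

End Main.

Theorem lemma3p2 (R : realType) (N : nat) (Rad a b r0 lam : R) :
  0 <= a -> 0 <= b -> 0 < r0 -> 1 < lam ->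
  exists c C : R, [/\ 0 < c, 0 < C &
    forall (Om : set ('I_N -> R)) (u : ('I_N -> R) -> R),
      eopen Om -> inner_radius Om = Rad%:E ->
      (c%:E * Lnormw a b Om u <= local_quantity a b r0 lam Om u)%E /\
      (local_quantity a b r0 lam Om u <= C%:E * Lnormw a b Om u)%E].
Proof.
move=> a0 b0 r0_gt0 lam_gt1.
have KL0 : 0 < lower_const r0 lam Rad.
  exact: lt_le_trans ltr01 (lower_const_ge1 r0_gt0 lam_gt1 Rad).
have KU0 : 0 < upper_const lam := lt_le_trans ltr01 (upper_const_ge1 lam).
exists (3 * powR (lower_const r0 lam Rad) (a + b))^-1, (powR (upper_const lam) (a + b)).
split; first by rewrite invr_gt0 mulr_gt0 // powR_gt0.
  exact: powR_gt0.
move=> Om u oOm hR; split.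
  exact: lower_bound.
exact (upper_bound r0 a0 b0 lam_gt1 u oOm hR).
Qed.
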